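(* Let $R$ be a ring with identity and an involution $*$, and let $a,b,c\in R$. Then: (i) $a$ is left $(b,c)$-invertible if and only if $a^*$ is right $(c^*,b^* )$-invertible; (ii) if $b$ and $c$ are regular, then $a$ is left annihilator $(b,c)$-invertible if and only if $a^*$ is right annihilator $(c^*,b^* )$-invertible.
   Context: An involution is a map $*:R\to R$ with $(x^* )^*=x$, $(xy)^*=y^*x^*$, $(x+y)^*=x^*+y^*$. An element $x$ is regular if $x=xzx$ for some $z\in R$. For $x\in R$: $xR=\{xr:r\in R\}$, $Rx=\{rx:r\in R\}$, $x^\circ=\{r: xr=0\}$, ${}^\circ x=\{r: rx=0\}$. An element $a$ is left $(b,c)$-invertible if there is $y$ with $Ry\subseteq Rc$ and $yab=b$; right $(b,c)$-invertible if there is $y$ with $yR\subseteq bR$ and $cay=c$; right annihilator $(b,c)$-invertible if there is $y$ with $c^\circ\subseteq y^\circ$ and $yab=b$; left annihilator $(b,c)$-invertible if there is $y$ with ${}^\circ b\subseteq {}^\circ y$ and $cay=c$. *)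

From mathcomp Require Import all_boot all_algebra.
Set Implicit Arguments. Unset Strict Implicit. Unset Printing Implicit Defensive.
Import GRing.Theory.
Local Open Scope ring_scope.

Definition involution (R : pzRingType) (s : R -> R) : Prop :=
  (forall x, s (s x) = x) /\
  (forall x y, s (x * y) = s y * s x) /\
  (forall x y, s (x + y) = s x + s y).

Definition regular (R : pzRingType) (x : R) : Prop := exists z, x = x * z * x.

Definition in_rideal (R : pzRingType) (x t : R) : Prop := exists r, t = x * r.
Definition in_lideal (R : pzRingType) (x t : R) : Prop := exists r, t = r * x.
Definition in_rann (R : pzRingType) (x r : R) : Prop := x * r = 0.
Definition in_lann (R : pzRingType) (x r : R) : Prop := r * x = 0.

Definition left_bc_inv (R : pzRingType) (a b c : R) : Prop :=
  exists y, (forall t, in_lideal y t -> in_lideal c t) /\ y * a * b = b.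
Definition right_bc_inv (R : pzRingType) (a b c : R) : Prop :=
  exists y, (forall t, in_rideal y t -> in_rideal b t) /\ c * a * y = c.
Definition right_ann_bc_inv (R : pzRingType) (a b c : R) : Prop :=
  exists y, (forall r, in_rann c r -> in_rann y r) /\ y * a * b = b.
Definition left_ann_bc_inv (R : pzRingType) (a b c : R) : Prop :=
  exists y, (forall r, in_lann b r -> in_lann y r) /\ c * a * y = c.

From mathcomp Require Import all_boot all_algebra.
Import GRing.Theory.
Local Open Scope ring_scope.

(* An involution is an additive anti-automorphism, so it exchanges left and
   right principal ideals and left and right annihilators; a witness [y] for
   one-sided invertibility of [a] thus turns into the witness [s y] for [s a]
   with the roles of the sides (and of [b] and [c]) swapped. *)

Section Involution.

Variables (R : pzRingType) (s : R -> R).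
Hypothesis s_inv : involution s.

Lemma involutionK : involutive s.
Proof. by case: s_inv. Qed.

Lemma involutionM (x y : R) : s (x * y) = s y * s x.
Proof. by case: s_inv => _ []. Qed.

Lemma involution_inj : injective s.
Proof. exact: can_inj involutionK. Qed.

Lemma involution0 : s 0 = 0.
Proof.
case: s_inv => _ [_ sD].
by apply: (addrI (s 0)); rewrite -sD !addr0.
Qed.

Lemma in_lideal_involution (x t : R) : in_lideal x t <-> in_rideal (s x) (s t).
Proof.
split=> [[r ->] | [r Er]]; first by exists (s r); rewrite involutionM.
by exists (s r); apply: involution_inj; rewrite Er involutionM involutionK.
Qed.

Lemma in_lann_involution (x r : R) : in_lann x r <-> in_rann (s x) (s r).
Proof.
rewrite /in_lann /in_rann -involutionM.
split=> [-> | E]; first exact: involution0.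
by apply: involution_inj; rewrite E involution0.
Qed.

Lemma involutionM3 (x y z : R) : s (x * y * z) = s z * s y * s x.
Proof. by rewrite !involutionM mulrA. Qed.

Lemma lideal_sub_involution (y c : R) :
  (forall t, in_lideal y t -> in_lideal c t) <->
  (forall t, in_rideal (s y) t -> in_rideal (s c) t).
Proof.
split=> sub t.
- by rewrite -(involutionK t) => /in_lideal_involution/sub/in_lideal_involution.
- by move=> /in_lideal_involution/sub/in_lideal_involution.
Qed.

Lemma lann_sub_involution (b y : R) :
  (forall r, in_lann b r -> in_lann y r) <->
  (forall r, in_rann (s b) r -> in_rann (s y) r).
Proof.
split=> sub r.
- move=> sbr; rewrite -(involutionK r).
  apply/(in_lann_involution y (s r)).1/sub/(in_lann_involution b (s r)).2.
  by rewrite involutionK.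
- by move=> /(in_lann_involution b r).1/sub/(in_lann_involution y r).2.
Qed.

Lemma left_bc_inv_involution (a b c : R) :
  left_bc_inv a b c <-> right_bc_inv (s a) (s c) (s b).
Proof.
split=> [[y [sub E]] | [y [sub E]]]; exists (s y); split.
- exact/lideal_sub_involution.
- by rewrite -involutionM3 E.
- by apply/lideal_sub_involution; rewrite involutionK.
- by apply: involution_inj; rewrite involutionM3 involutionK.
Qed.

Lemma left_ann_bc_inv_involution (a b c : R) :
  left_ann_bc_inv a b c <-> right_ann_bc_inv (s a) (s c) (s b).
Proof.
split=> [[y [sub E]] | [y [sub E]]]; exists (s y); split.
- exact/lann_sub_involution.
- by rewrite -involutionM3 E.
- by apply/lann_sub_involution; rewrite involutionK.
- by apply: involution_inj; rewrite involutionM3 involutionK.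
Qed.

End Involution.

Theorem proposition2p8 (R : pzRingType) (s : R -> R) (a b c : R) :
  involution s ->
  (left_bc_inv a b c <-> right_bc_inv (s a) (s c) (s b)) /\
  (regular b -> regular c ->
     (left_ann_bc_inv a b c <-> right_ann_bc_inv (s a) (s c) (s b))).
Proof.
move=> s_inv; split=> [|_ _].
- exact: left_bc_inv_involution.
- exact: left_ann_bc_inv_involution.
Qed.
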